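(* Let $V=\mathbb{C}x+\mathbb{C}y+\mathbb{C}z$ with the action of the Heisenberg group $H_3$ given by $e_1\cdot x=z,\ e_1\cdot y=x,\ e_1\cdot z=y$, $e_2\cdot x=x,\ e_2\cdot y=\omega y,\ e_2\cdot z=\omega^2 z$ ($\omega$ a primitive third root of unity), extended diagonally to tensor powers. For $p=[a:b:c]\in\mathbb{P}^2$ let $W_p\subset V\otimes V$ be the span of $ayz+bzy+cx^2,\ azx+bxz+cy^2,\ axy+byx+cz^2$. Then for each $p\in\{[1:0:0],[0:1:0],[0:0:1]\}$ (the vertices of $\mathbf{V}(abc)$), one has $W_p\otimes V\cap V\otimes W_p\cong \chi_{0,0}\oplus\chi_{1,0}\oplus\chi_{2,0}$ as $H_3$-representations; in particular $(W_p\otimes V\cap V\otimes W_p)^{H_3}$ is 1-dimensional.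
   Context: $H_3=\langle e_1,e_2\mid [e_1,e_2]\text{ central},\ e_1^3=e_2^3=1\rangle$. $\chi_{a,b}$ is the 1-dimensional representation with $\chi_{a,b}(e_1)=\omega^a$, $\chi_{a,b}(e_2)=\omega^b$. The intersection is taken inside $V\otimes V\otimes V$. *)

From HB Require Import structures.
From mathcomp Require Import all_boot all_order all_algebra algC.
From mathcomp Require Import mxtens.
Set Implicit Arguments. Unset Strict Implicit. Unset Printing Implicit Defensive.
Import GRing.Theory Num.Theory.
Local Open Scope ring_scope.

(* V = C x + C y + C z, vectors are row vectors 'rV[algC]_3,
   x = e_0, y = e_1, z = e_2.  Tensor products are Kronecker products
   (mxtens: row-major indexing, associative). *)
Definition basis3 (i : 'I_3) : 'rV[algC]_3 := delta_mx 0 i.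
Definition vx := basis3 (inord 0).
Definition vy := basis3 (inord 1).
Definition vz := basis3 (inord 2).

(* Action of the generators e1, e2 of H_3 on V, acting on row vectors
   v |-> v *m M :  e1: x->z, y->x, z->y ;  e2: x->x, y->w y, z->w^2 z. *)
Definition E1 : 'M[algC]_3 :=
  \matrix_(i < 3, j < 3) (val j == ((val i + 2) %% 3)%N)%:R.
Definition E2 (w : algC) : 'M[algC]_3 := diag_mx (\row_(i < 3) w ^+ val i).

Definition tens3 (M : 'M[algC]_3) : 'M[algC]_(3 * 3 * 3) := M *t M *t M.

Definition Wp (a b c : algC) : 'M[algC]_(3, 3 * 3) :=
  \matrix_(i < 3) nth 0
    [:: a *: (vy *t vz) + b *: (vz *t vy) + c *: (vx *t vx);
        a *: (vz *t vx) + b *: (vx *t vz) + c *: (vy *t vy);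
        a *: (vx *t vy) + b *: (vy *t vx) + c *: (vz *t vz)] i.

Definition Ip (a b c : algC) : 'M[algC]_(3 * 3 * 3) :=
  ((Wp a b c *t (1%:M : 'M[algC]_3)) :&: ((1%:M : 'M[algC]_3) *t Wp a b c))%MS.

(* The 1-dimensional representation chi_{k,l}: e1 |-> w^k, e2 |-> w^l.
   The direct sum chi_{k1,l1} + chi_{k2,l2} + chi_{k3,l3} acts on C^3 by
   the diagonal matrices below. *)
Definition chi_sum_e1 (w : algC) (k1 k2 k3 : nat) : 'M[algC]_3 :=
  diag_mx (\row_(i < 3) nth 0 [:: w ^+ k1; w ^+ k2; w ^+ k3] i).
Definition chi_sum_e2 (w : algC) (l1 l2 l3 : nat) : 'M[algC]_3 :=
  diag_mx (\row_(i < 3) nth 0 [:: w ^+ l1; w ^+ l2; w ^+ l3] i).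

(* Isomorphism of H_3-representations between the H_3-stable subspace U of
   V(x)V(x)V (with generators acting by T1, T2) and C^3 with generators acting
   by D1, D2: a linear isomorphism C^3 -> U (given by the rows of B, a basis of
   U) intertwining the actions of the generators e1, e2 (which generate H_3). *)
Definition rep_iso_to (n : nat) (U T1 T2 : 'M[algC]_n) (D1 D2 : 'M[algC]_3) :=
  exists B : 'M[algC]_(3, n),
    [/\ row_free B, (B == U)%MS, B *m T1 = D1 *m B & B *m T2 = D2 *m B].

Definition invariants (n : nat) (U T1 T2 : 'M[algC]_n) : 'M[algC]_n :=
  (U :&: kermx (T1 - 1%:M) :&: kermx (T2 - 1%:M))%MS.

(* At a vertex of V(abc), W_p is a coordinate subspace of V ⊗ V: it is spanned
   by the monomials x_{k+s} ⊗ x_{k+t}, k ∈ Z/3, for suitable s, t (x_0, x_1, x_2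
   = x, y, z).  So W_p ⊗ V ∩ V ⊗ W_p is spanned by the three monomials
   x_{k+s} ⊗ x_{k+t} ⊗ x_{k+2t-s}, whose indices form arithmetic progressions.
   On this basis e1 acts as the cyclic shift k ↦ k - 1, and e2 trivially because
   the indices of each monomial sum to 0 in Z/3.  The discrete Fourier transform
   diagonalises the shift with eigenvalues 1, ω, ω², which gives
   χ_{0,0} ⊕ χ_{1,0} ⊕ χ_{2,0}; its invariants are the line χ_{0,0}. *)
From HB Require Import structures.
From mathcomp Require Import all_boot all_order all_algebra algC.
From mathcomp Require Import mxtens.
Set Implicit Arguments. Unset Strict Implicit. Unset Printing Implicit Defensive.
Import GRing.Theory Num.Theory.
Local Open Scope ring_scope.

Local Notation idx := mxtens_index.
Local Notation coordmx h := (rowsub h 1%:M).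

Section CoordinateSubspaces.
Variable R : fieldType.
Implicit Types m n : nat.

Lemma coordmxE m n (h : 'I_m -> 'I_n) i j : coordmx h i j = (h i == j)%:R :> R.
Proof. by rewrite !mxE. Qed.

Lemma row_coordmx m n (h : 'I_m -> 'I_n) i :
  row i (coordmx h) = delta_mx 0 (h i) :> 'rV[R]_n.
Proof. by rewrite row_rowsub row1. Qed.

Lemma sub_coordmxP m n (h : 'I_m -> 'I_n) (v : 'rV[R]_n) :
  reflect (forall c, v 0 c != 0 -> c \in codom h) (v <= coordmx h)%MS.
Proof.
apply: (iffP idP) => [/submxP[u ->] c | supp_v].
  apply: contraR => h_c; rewrite mxE big1 // => k _.
  rewrite coordmxE; case: eqP => [h_k | _]; last by rewrite mulr0.
  by case/negP: h_c; rewrite -h_k codom_f.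
rewrite [v]row_sum_delta; apply/summx_sub => c _.
have [->|/supp_v/codomP[k ->]] := eqVneq (v 0 c) 0; first by rewrite scale0r sub0mx.
by rewrite scalemx_sub // -row_coordmx row_sub.
Qed.

Lemma capmx_coordmx m1 m2 m n (h1 : 'I_m1 -> 'I_n) (h2 : 'I_m2 -> 'I_n)
    (g : 'I_m -> 'I_n) :
  (forall c, (c \in codom g) = (c \in codom h1) && (c \in codom h2)) ->
  ((coordmx h1 : 'M[R]_(m1, n)) :&: coordmx h2 == coordmx g)%MS.
Proof.
move=> codom_g; apply/andP; split; apply/row_subP => i.
  set v := row i _.
  have /sub_coordmxP supp1 : (v <= coordmx h1)%MS := submx_trans (row_sub i _) (capmxSl _ _).
  have /sub_coordmxP supp2 : (v <= coordmx h2)%MS := submx_trans (row_sub i _) (capmxSr _ _).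
  by apply/sub_coordmxP => c nz; rewrite codom_g supp1 ?supp2.
have /andP[g_h1 g_h2] : (g i \in codom h1) && (g i \in codom h2).
  by rewrite -codom_g codom_f.
by rewrite sub_capmx row_coordmx; apply/andP; split; apply/sub_coordmxP => c;
  rewrite mxE eqxx /=; case: (c =P g i) => [-> //|_]; rewrite eqxx.
Qed.

Lemma coordmx_free m n (h : 'I_m -> 'I_n) :
  injective h -> row_free (coordmx h : 'M[R]_(m, n)).
Proof.
move=> inj_h; apply/row_freeP; exists (colsub h 1%:M).
rewrite -mxsub_mul mul1mx; apply/matrixP => i j.
by rewrite !mxE (inj_eq inj_h).
Qed.

Lemma mul_coordmx m n p (g : 'I_m -> 'I_n) (h : 'I_n -> 'I_p) :
  coordmx g *m coordmx h = coordmx (h \o g) :> 'M[R]_(m, p).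
Proof. by rewrite mul_rowsub_mx mul1mx rowsub_comp. Qed.

Lemma coordmx_mul_diag m n (h : 'I_m -> 'I_n) (d : 'rV[R]_n) :
  (forall k, d 0 (h k) = 1) -> coordmx h *m diag_mx d = coordmx h.
Proof.
move=> d_h; apply/matrixP => i j; rewrite mul_mx_diag !mxE.
by case: eqP => [<-|_]; rewrite ?d_h ?mulr1 ?mul0r.
Qed.

End CoordinateSubspaces.

Section Tensors.
Variable R : fieldType.
Implicit Types m n p q : nat.

Lemma mxtens_index_inj m n : injective (@mxtens_index m n).
Proof. exact: can_inj (@mxtens_indexK m n). Qed.

Definition tens_index m n p q (h1 : 'I_m -> 'I_n) (h2 : 'I_p -> 'I_q)
    (r : 'I_(m * p)) : 'I_(n * q) :=
  idx (h1 (mxtens_unindex r).1, h2 (mxtens_unindex r).2).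

Lemma tens_indexE m n p q (h1 : 'I_m -> 'I_n) (h2 : 'I_p -> 'I_q) i j :
  tens_index h1 h2 (idx (i, j)) = idx (h1 i, h2 j).
Proof. by rewrite /tens_index mxtens_indexK. Qed.

Lemma codom_tens_index m n p q (h1 : 'I_m -> 'I_n) (h2 : 'I_p -> 'I_q) i j :
  (idx (i, j) \in codom (tens_index h1 h2)) = (i \in codom h1) && (j \in codom h2).
Proof.
apply/codomP/andP => [[r] | [/codomP[k ->] /codomP[l ->]]].
  case: (mxtens_indexP r) => k l; rewrite tens_indexE => /mxtens_index_inj.
  by case=> -> ->; rewrite !codom_f.
by exists (idx (k, l)); rewrite tens_indexE.
Qed.

Lemma tens_coordmx m n p q (h1 : 'I_m -> 'I_n) (h2 : 'I_p -> 'I_q) :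
  coordmx h1 *t coordmx h2 = coordmx (tens_index h1 h2) :> 'M[R]_(m * p, n * q).
Proof.
apply/matrixP => r c; case: (mxtens_indexP r) => i j; case: (mxtens_indexP c) => k l.
rewrite tensmxE !coordmxE tens_indexE (inj_eq (@mxtens_index_inj _ _)) xpair_eqE.
by rewrite -natrM mulnb.
Qed.

Lemma tens_rowE n q (d1 : 'rV[R]_n) (d2 : 'rV[R]_q) i j :
  (d1 *t d2) 0 (idx (i, j)) = d1 0 i * d2 0 j.
Proof.
set o := (X in (_ *t _) X _).
by rewrite (_ : o = idx (ord0 : 'I_1, ord0 : 'I_1)) ?tensmxE //; apply: val_inj.
Qed.

Lemma tens_delta n q (i : 'I_n) (j : 'I_q) :
  (delta_mx 0 i : 'rV[R]_n) *t (delta_mx 0 j : 'rV[R]_q) = delta_mx 0 (idx (i, j)).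
Proof.
apply/matrixP => r c; case: (mxtens_indexP r) => r1 r2; case: (mxtens_indexP c) => k l.
by rewrite tensmxE !mxE !ord1 (inj_eq (@mxtens_index_inj _ _)) xpair_eqE -natrM mulnb.
Qed.

Lemma tens_diag_mx n q (d1 : 'rV[R]_n) (d2 : 'rV[R]_q) :
  diag_mx d1 *t diag_mx d2 = diag_mx (d1 *t d2).
Proof.
apply/matrixP => r c; case: (mxtens_indexP r) => i j; case: (mxtens_indexP c) => k l.
rewrite tensmxE [RHS]mxE tens_rowE !mxE (inj_eq (@mxtens_index_inj _ _)) xpair_eqE.
by case: (i =P k); case: (j =P l); rewrite /= ?mulr0n ?mulr1n ?mulr0 ?mul0r.
Qed.

End Tensors.

Section ArithmeticProgressions.
Variables (n : nat) (s t : 'I_n.+1).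

Definition aprog2 (k : 'I_n.+1) : 'I_(n.+1 * n.+1) := idx (k + s, k + t).
Definition aprog3 (k : 'I_n.+1) : 'I_(n.+1 * n.+1 * n.+1) :=
  idx (idx (k + s, k + t), k + t + t - s).

Lemma codom_aprog2 u v : (idx (u, v) \in codom aprog2) = (v - u == t - s).
Proof.
apply/codomP/eqP => [[k /mxtens_index_inj[-> ->]] | duv].
  by rewrite opprD addrACA subrr add0r.
exists (u - s); congr idx; congr pair; first by rewrite subrK.
by rewrite -addrA [- s + t]addrC -duv addrC subrK.
Qed.

Lemma codom_aprog3 u v x :
  (idx (idx (u, v), x) \in codom aprog3) = (v - u == t - s) && (x - v == t - s).
Proof.
apply/codomP/andP => [[k] | [/eqP duv /eqP dxv]].
  move=> /mxtens_index_inj/pair_equal_spec[/mxtens_index_inj/pair_equal_spec[-> ->] ->].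
  split; apply/eqP; first by rewrite opprD addrACA subrr add0r.
  by rewrite addrAC [k + t + t]addrC addrK.
have ev : v = u - s + t by rewrite -addrA [- s + t]addrC -duv addrC subrK.
exists (u - s); rewrite /aprog3 -ev subrK; congr idx; congr pair.
by rewrite -[x](subrK v) dxv addrC addrA.
Qed.

Lemma aprog3_inj : injective aprog3.
Proof.
move=> k l /(congr1 (fun r => (mxtens_unindex (mxtens_unindex r).1).1)).
by rewrite /aprog3 !mxtens_indexK; apply: addIr.
Qed.

Lemma aprog3_translate m k :
  tens_index (tens_index (+%R^~ m) (+%R^~ m)) (+%R^~ m) (aprog3 k) = aprog3 (k + m).
Proof. by rewrite /aprog3 !tens_indexE !(addrAC _ _ m). Qed.

End ArithmeticProgressions.

Lemma aprog3_sum (s t k : 'I_3) : (k + s) + (k + t) + (k + t + t - s) = 0.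
Proof.
by case: s t k => [[|[|[|//]]] ?] [[|[|[|//]]] ?] [[|[|[|//]]] ?]; apply: val_inj.
Qed.

Lemma capmx_aprog2 (R : fieldType) (s t : 'I_3) :
  ((coordmx (aprog2 s t) : 'M[R]_(3, 3 * 3)) *t (1%:M : 'M_3)
    :&: (1%:M : 'M_3) *t coordmx (aprog2 s t) == coordmx (aprog3 s t))%MS.
Proof.
rewrite -[1%:M : 'M[R]_3]mxsub_id !tens_coordmx.
apply: capmx_coordmx => c; case: (mxtens_indexP c) => uv x; case: (mxtens_indexP uv) => u v.
rewrite codom_aprog3 codom_tens_index codom_aprog2 codom_f andbT; congr andb.
(* The right factor indexes V ⊗ (V ⊗ V), i.e. 'I_(3 * (3 * 3)): reassociate. *)
have -> : idx (idx (u, v), x) = idx (u, idx (v, x)) :> 'I_(3 * (3 * 3)).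
  by apply: val_inj; rewrite /= mulnDl -mulnA addnA.
apply: esym; apply: etrans (codom_tens_index _ _ _ _) _.
by rewrite codom_f codom_aprog2.
Qed.

Section Fourier.
Variables (R : fieldType) (n : nat) (w : R).
Hypothesis w_prim : n.+1.-primitive_root w.

Definition fourier_mx : 'M[R]_n.+1 := \matrix_(k, j) w ^+ (k * j).

Lemma fourier_mx_shift :
  fourier_mx *m coordmx (fun j => j - Zp1) = diag_mx (\row_k w ^+ k) *m fourier_mx.
Proof.
apply/matrixP => k j; rewrite mul_diag_mx !mxE (bigD1 (j + Zp1)) //= big1 => [|l].
  have wk : (w ^+ k) ^+ n.+1 = 1 by rewrite exprAC (prim_expr_order w_prim) expr1n.
  rewrite !mxE addrK eqxx mulr1 addr0 -exprD -mulnS !exprM -[RHS](expr_mod _ wk).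
  by rewrite /= modnDmr addn1.
by move=> ne; rewrite !mxE subr_eq (negbTE ne) mulr0.
Qed.

Lemma fourier_mx_unit : fourier_mx \in unitmx.
Proof.
have -> : fourier_mx = Vandermonde n.+1 (\row_j w ^+ j).
  by apply/matrixP => k j; rewrite !mxE -exprM mulnC.
rewrite unitmxE unitfE det_Vandermonde; apply/prodf_neq0 => i _; apply/prodf_neq0 => j lt_ij.
rewrite !mxE subr_eq0 (eq_prim_root_expr w_prim) !modn_small //.
by rewrite neq_ltn lt_ij orbT.
Qed.

End Fourier.

Lemma sub_invariantsE n (U T1 T2 : 'M[algC]_n) (v : 'rV_n) :
  (v <= invariants U T1 T2)%MS = [&& (v <= U)%MS, v *m T1 == v & v *m T2 == v].
Proof. by rewrite !sub_capmx !sub_kermx !mulmxBr !mulmx1 !subr_eq0 andbA. Qed.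

Lemma rank_invariants_rep_iso n (U T1 T2 : 'M[algC]_n) (D1 D2 : 'M[algC]_3) :
  rep_iso_to U T1 T2 D1 D2 -> \rank (invariants U T1 T2) = \rank (invariants 1%:M D1 D2).
Proof.
case=> B [freeB /eqmxP eqBU BT1 BT2].
have invB (u : 'rV_3) : (u *m B <= invariants U T1 T2)%MS = (u <= invariants 1%:M D1 D2)%MS.
  rewrite !sub_invariantsE submx1 -eqBU submxMl -!mulmxA BT1 BT2 !mulmxA.
  by rewrite !(inj_eq (row_free_inj freeB)).
rewrite -(mxrankMfree _ freeB); apply/eqmx_rank/andP; split; apply/row_subP => i.
  have inv_v := row_sub i (invariants U T1 T2).
  have /submxP[u def_v] : (row i (invariants U T1 T2) <= B)%MS.
    by move: inv_v; rewrite sub_invariantsE eqBU => /and3P[].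
  by rewrite def_v submxMr // -invB -def_v.
by rewrite row_mul invB row_sub.
Qed.

Lemma E1_coordmx : E1 = coordmx (fun j : 'I_3 => j - Zp1).
Proof.
apply/matrixP => i j; rewrite !mxE eq_sym.
by case: i => [[|[|[|//]]] ?]; case: j => [[|[|[|//]]] ?].
Qed.

Lemma chi_sum_e1_diag (w : algC) : chi_sum_e1 w 0 1 2 = diag_mx (\row_(k < 3) w ^+ k).
Proof. by apply/matrixP => i j; rewrite !mxE; case: i => [[|[|[|//]]] ?]. Qed.

Lemma chi_sum_e2_1 (w : algC) : chi_sum_e2 w 0 0 0 = 1%:M.
Proof. by apply/matrixP => i j; rewrite !mxE; case: i => [[|[|[|//]]] ?]; rewrite expr0. Qed.

Lemma rank_invariants_chi (w : algC) : 3.-primitive_root w ->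
  \rank (invariants 1%:M (chi_sum_e1 w 0 1 2) (chi_sum_e2 w 0 0 0)) = 1%N.
Proof.
move=> w_prim; rewrite chi_sum_e1_diag chi_sum_e2_1.
pose e0 : 'M[algC]_(1, 3) := coordmx (fun _ : 'I_1 => 0).
have invE (v : 'rV_3) :
    (v <= invariants 1%:M (diag_mx (\row_k w ^+ k)) 1%:M)%MS = (v <= e0)%MS.
  rewrite sub_invariantsE submx1 mulmx1 eqxx andbT.
  apply/eqP/sub_coordmxP => [fixed_v c | supp_v].
    move/matrixP/(_ 0 c): fixed_v; rewrite mul_mx_diag !mxE => fixed_vc nz_vc.
    have : w ^+ c == w ^+ 0 by rewrite expr0 -(can_eq (mulKf nz_vc)) mulr1 fixed_vc.
    rewrite (eq_prim_root_expr w_prim) modn_small // => /eqP c0.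
    by apply/codomP; exists 0; apply: val_inj.
  apply/matrixP => i j; rewrite mul_mx_diag !mxE [i]ord1.
  have [->|/supp_v/codomP[_ ->]] := eqVneq (v 0 j) 0; first by rewrite mul0r.
  by rewrite expr0 mulr1.
have -> : \rank (invariants 1%:M (diag_mx (\row_(k < 3) w ^+ k)) 1%:M) = \rank e0.
  apply: eqmx_rank; apply/andP; split; apply/row_subP => i.
    by rewrite -invE row_sub.
  by rewrite invE row_sub.
by apply/eqP/coordmx_free => i j; rewrite !ord1.
Qed.

Lemma expr_Zp_add (R : pzRingType) n (x : R) (i j : 'I_n.+1) :
  x ^+ n.+1 = 1 -> x ^+ (i + j)%R = x ^+ i * x ^+ j.
Proof. by move=> xn; rewrite -exprD -[RHS](expr_mod _ xn). Qed.

Lemma aprog3_E2 (w : algC) (s t : 'I_3) : w ^+ 3 = 1 ->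
  coordmx (aprog3 s t) *m tens3 (E2 w) = coordmx (aprog3 s t).
Proof.
move=> w3; rewrite /tens3 /E2 !tens_diag_mx; apply: coordmx_mul_diag => k.
by rewrite !tens_rowE !mxE -!expr_Zp_add // aprog3_sum.
Qed.

Lemma aprog3_E1 (s t : 'I_3) :
  coordmx (aprog3 s t) *m tens3 E1 = E1 *m coordmx (aprog3 s t).
Proof.
rewrite E1_coordmx /tens3 !tens_coordmx !mul_coordmx; apply: eq_rowsub => k.
exact: aprog3_translate.
Qed.

Lemma Wp_vertex a b c : (a, b, c) \in [:: (1, 0, 0); (0, 1, 0); (0, 0, 1)] ->
  exists s t : 'I_3, Wp a b c = coordmx (aprog2 s t).
Proof.
rewrite !inE => /or3P[] /eqP[-> -> ->]; [exists 1, 2 | exists 2, 1 | exists 0, 0];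
  apply/row_matrixP => k; rewrite rowK row_coordmx /vx /vy /vz /basis3;
  by case: k => [[|[|[|//]]] ?]; rewrite /= !scale1r !scale0r ?addr0 ?add0r tens_delta;
  congr delta_mx; apply: val_inj; rewrite /= ?inordK.
Qed.

Lemma rep_iso_vertex (w : algC) (s t : 'I_3) a b c : 3.-primitive_root w ->
  Wp a b c = coordmx (aprog2 s t) ->
  rep_iso_to (Ip a b c) (tens3 E1) (tens3 (E2 w))
    (chi_sum_e1 w 0 1 2) (chi_sum_e2 w 0 0 0).
Proof.
move=> w_prim Wst.
have F_full : row_full (fourier_mx 2 w) by rewrite row_full_unit fourier_mx_unit.
exists (fourier_mx 2 w *m coordmx (aprog3 s t)); split.
- by rewrite /row_free mxrankMfree ?(eqP F_full) //; apply/coordmx_free/aprog3_inj.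
- apply/eqmxP/(eqmx_trans (eqmxMfull _ F_full))/eqmx_sym/eqmxP.
  by rewrite /Ip Wst capmx_aprog2.
- by rewrite -mulmxA aprog3_E1 E1_coordmx mulmxA fourier_mx_shift // chi_sum_e1_diag -mulmxA.
- by rewrite chi_sum_e2_1 mul1mx -mulmxA aprog3_E2 // (prim_expr_order w_prim).
Qed.

Theorem mainTheorem6 (w : algC) (hw : 3.-primitive_root w) (a b c : algC)
  (hp : (a, b, c) \in [:: (1, 0, 0); (0, 1, 0); (0, 0, 1)]) :
  rep_iso_to (Ip a b c) (tens3 E1) (tens3 (E2 w))
    (chi_sum_e1 w 0 1 2) (chi_sum_e2 w 0 0 0)
  /\ \rank (invariants (Ip a b c) (tens3 E1) (tens3 (E2 w))) = 1%N.
Proof.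
have [s [t Wst]] := Wp_vertex hp.
have iso := rep_iso_vertex hw Wst.
by split; rewrite // (rank_invariants_rep_iso iso) rank_invariants_chi.
Qed.
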